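(* Let $\Lambda$ be a left-artinian ring, $\mathcal{C}=\mathrm{mod}(\Lambda)$, and let $\alpha,\beta$ be pre-radicals on $\mathcal{C}$. If $\alpha^2=\alpha$ and $\mathcal{T}_\beta\subseteq\mathcal{F}_\alpha$, then $\mathrm{top}(\alpha(M))\in\mathcal{F}_\beta\cap\mathcal{T}_\alpha$ for every $M\in\mathcal{C}$.
   Context: $\mathcal{C}$ is the category of finitely generated left $\Lambda$-modules; $\mathrm{top}(M)=M/\mathrm{rad}(M)$. A pre-radical is an additive subfunctor of the identity functor. $\mathcal{F}_\alpha=\{M:\alpha(M)=0\}$, $\mathcal{T}_\alpha=\{M:\alpha(M)=M\}$. *)

From HB Require Import structures.
From mathcomp Require Import all_boot all_order all_algebra.
From mathcomp Require Import boolp.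
Set Implicit Arguments. Unset Strict Implicit. Unset Printing Implicit Defensive.
Import GRing.Theory.
Local Open Scope ring_scope.

Definition left_ideal (R : pzRingType) (I : R -> Prop) : Prop :=
  [/\ I 0, (forall x y, I x -> I y -> I (x + y)) & (forall r x, I x -> I (r * x))].

Definition left_artinian (R : pzRingType) : Prop :=
  forall I : nat -> R -> Prop,
    (forall n, left_ideal (I n)) ->
    (forall n x, I n.+1 x -> I n x) ->
    exists N, forall n, (N <= n)%N -> I n = I N.

Section Modules.
Variable R : pzRingType.

Definition fg (V : lmodType R) : Prop :=
  exists n (s : 'I_n -> V), forall v : V,
    exists c : 'I_n -> R, v = \sum_(i < n) c i *: s i.

Section Sub.
Variable V : lmodType R.

Record submod (S : V -> Prop) : Prop := Submod {
  sub0 : S 0;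
  subD : forall x y, S x -> S y -> S (x + y);
  subZ : forall a x, S x -> S (a *: x) }.

Record submodule := Submodule { sm_set :> V -> Prop; sm_ok : submod sm_set }.

Lemma subB (S : submodule) x y : S x -> S y -> S (x - y).
Proof.
move=> Sx Sy; apply: subD (sm_ok S) _ _ Sx _.
by rewrite -scaleN1r; apply: subZ (sm_ok S) _ _ Sy.
Qed.

Definition subm (S : submodule) := {x : V | S x}.

Variable S : submodule.

Lemma subm_inj (u v : subm S) : proj1_sig u = proj1_sig v -> u = v.
Proof.
case: u => u pu; case: v => v pv /= E; subst v.
by rewrite (Prop_irrelevance pu pv).
Qed.

HB.instance Definition _ := gen_eqMixin (subm S).
HB.instance Definition _ := gen_choiceMixin (subm S).

Definition subm0 : subm S := exist _ 0 (sub0 (sm_ok S)).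
Definition submD (u v : subm S) : subm S :=
  exist _ (proj1_sig u + proj1_sig v) (subD (sm_ok S) (proj2_sig u) (proj2_sig v)).
Definition submZ (a : R) (u : subm S) : subm S :=
  exist _ (a *: proj1_sig u) (subZ (sm_ok S) a (proj2_sig u)).
Definition submN (u : subm S) : subm S := submZ (-1) u.

Lemma submDA : associative submD.
Proof. by move=> u v w; apply: subm_inj; rewrite /= addrA. Qed.
Lemma submDC : commutative submD.
Proof. by move=> u v; apply: subm_inj; rewrite /= addrC. Qed.
Lemma subm0D : left_id subm0 submD.
Proof. by move=> u; apply: subm_inj; rewrite /= add0r. Qed.
Lemma submND : left_inverse subm0 submN submD.
Proof. by move=> u; apply: subm_inj; rewrite /= scaleN1r addNr. Qed.

HB.instance Definition _ :=
  GRing.isZmodule.Build (subm S) submDA submDC subm0D submND.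

Lemma submZA a b (u : subm S) : submZ a (submZ b u) = submZ (a * b) u.
Proof. by apply: subm_inj; rewrite /= scalerA. Qed.
Lemma submZ1 : left_id 1 submZ.
Proof. by move=> u; apply: subm_inj; rewrite /= scale1r. Qed.
Lemma submZDr : right_distributive submZ (@submD).
Proof. by move=> a u v; apply: subm_inj; rewrite /= scalerDr. Qed.
Lemma submZDl v : {morph submZ^~ v : a b / a + b >-> submD a b}.
Proof. by move=> a b; apply: subm_inj; rewrite /= scalerDl. Qed.

HB.instance Definition _ :=
  GRing.Zmodule_isLmodule.Build R (subm S) submZA submZ1 submZDr submZDl.

Definition cls (x : V) : V -> Prop := fun y => S (y - x).
Definition quotm := {A : V -> Prop | exists x, A = cls x}.

Lemma quotm_inj (A B : quotm) : proj1_sig A = proj1_sig B -> A = B.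
Proof.
case: A => A pA; case: B => B pB /= E; subst B.
by rewrite (Prop_irrelevance pA pB).
Qed.

HB.instance Definition _ := gen_eqMixin quotm.
HB.instance Definition _ := gen_choiceMixin quotm.

Definition mkq (x : V) : quotm := exist _ (cls x) (ex_intro _ x erefl).
Definition repq (A : quotm) : V := projT1 (cid (proj2_sig A)).

Lemma mkq_eq x y : S (x - y) -> mkq x = mkq y.
Proof.
move=> Sxy; apply: quotm_inj; rewrite /= /cls.
apply: funext => z; apply: propext; split => Sz.
- by have := subD (sm_ok S) Sz Sxy; rewrite addrA subrK.
- by have := subB Sz Sxy; rewrite opprB addrA subrK.
Qed.

Lemma mkq_eqP x y : mkq x = mkq y -> S (x - y).
Proof.
move=> /(congr1 (@proj1_sig _ _)) /= E.
have : cls x x by rewrite /cls subrr; exact: sub0 (sm_ok S).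
by rewrite E.
Qed.

Lemma mkq_rep A : mkq (repq A) = A.
Proof.
apply: quotm_inj; rewrite /repq; case: (cid _) => x /= ->.
by case: A => /= A [y E].
Qed.

Lemma repq_mkq x : S (repq (mkq x) - x).
Proof. by apply: mkq_eqP; rewrite mkq_rep. Qed.

Lemma quotmP (A : quotm) : exists x, A = mkq x.
Proof. by exists (repq A); rewrite mkq_rep. Qed.

Definition q0 : quotm := mkq 0.
Definition qD (A B : quotm) : quotm := mkq (repq A + repq B).
Definition qZ (a : R) (A : quotm) : quotm := mkq (a *: repq A).
Definition qN (A : quotm) : quotm := qZ (-1) A.

Lemma qD_mkq x y : qD (mkq x) (mkq y) = mkq (x + y).
Proof.
apply: mkq_eq.
have -> : repq (mkq x) + repq (mkq y) - (x + y)
        = (repq (mkq x) - x) + (repq (mkq y) - y).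
  by rewrite opprD addrACA.
by apply: subD (sm_ok S) _ _ (repq_mkq x) (repq_mkq y).
Qed.

Lemma qZ_mkq a x : qZ a (mkq x) = mkq (a *: x).
Proof.
by apply: mkq_eq; rewrite -scalerBr; apply: subZ (sm_ok S) _ _ (repq_mkq x).
Qed.

Lemma qDA : associative qD.
Proof.
move=> A B C; case: (quotmP A) => a ->; case: (quotmP B) => b ->.
by case: (quotmP C) => c ->; rewrite !qD_mkq addrA.
Qed.
Lemma qDC : commutative qD.
Proof.
by move=> A B; case: (quotmP A) => a ->; case: (quotmP B) => b ->; rewrite !qD_mkq addrC.
Qed.
Lemma q0D : left_id q0 qD.
Proof. by move=> A; case: (quotmP A) => a ->; rewrite /q0 qD_mkq add0r. Qed.
Lemma qND : left_inverse q0 qN qD.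
Proof.
by move=> A; case: (quotmP A) => a ->; rewrite /qN qZ_mkq qD_mkq scaleN1r addNr.
Qed.

HB.instance Definition _ := GRing.isZmodule.Build quotm qDA qDC q0D qND.

Lemma qZA a b (A : quotm) : qZ a (qZ b A) = qZ (a * b) A.
Proof. by case: (quotmP A) => x ->; rewrite !qZ_mkq scalerA. Qed.
Lemma qZ1 : left_id 1 qZ.
Proof. by move=> A; case: (quotmP A) => x ->; rewrite qZ_mkq scale1r. Qed.
Lemma qZDr : right_distributive qZ qD.
Proof.
move=> a A B; case: (quotmP A) => x ->; case: (quotmP B) => y ->.
by rewrite !(qD_mkq, qZ_mkq) scalerDr.
Qed.
Lemma qZDl A : {morph qZ^~ A : a b / a + b >-> qD a b}.
Proof.
by move=> a b; case: (quotmP A) => x ->; rewrite !(qD_mkq, qZ_mkq) scalerDl.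
Qed.

HB.instance Definition _ := GRing.Zmodule_isLmodule.Build R quotm qZA qZ1 qZDr qZDl.

End Sub.

Section Rad.
Variable V : lmodType R.

Definition maximal_sub (S : submodule V) : Prop :=
  (exists x, ~ S x) /\
  forall T : submodule V, (forall x, S x -> T x) ->
    (forall x, T x) \/ (forall x, T x <-> S x).

(* rad V = intersection of all maximal submodules (= V if there are none) *)
Definition rad_set (x : V) : Prop :=
  forall S : submodule V, maximal_sub S -> S x.

Lemma rad_submod : submod rad_set.
Proof.
split.
- by move=> S _; exact: sub0 (sm_ok S).
- by move=> x y hx hy S mS; apply: subD (sm_ok S) _ _ (hx S mS) (hy S mS).
- by move=> a x hx S mS; apply: subZ (sm_ok S) _ _ (hx S mS).
Qed.

Definition rad : submodule V := Submodule rad_submod.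

Definition top := quotm rad.
End Rad.

(* A pre-radical on C = mod(R): an assignment of a submodule alpha(M) to
   every module, which is a subfunctor of the identity on finitely
   generated modules: f(alpha M) <= alpha N for every R-linear f : M -> N
   between finitely generated modules.  (Additivity is automatic for
   subfunctors of the identity.)  Values on non-f.g. modules are irrelevant. *)
Definition preradical (alpha : forall V : lmodType R, submodule V) : Prop :=
  forall (M N : lmodType R) (f : {linear M -> N}),
    fg M -> fg N -> forall x : M, alpha M x -> alpha N (f x).

End Modules.

From Pilot Require Import Defs.
From HB Require Import structures.
From mathcomp Require Import all_boot all_order all_algebra.
From mathcomp Require Import boolp classical_sets.
From mathcomp Require Import zify.
Import GRing.Theory.
Set Implicit Arguments. Unset Strict Implicit. Unset Printing Implicit Defensive.
Local Open Scope ring_scope.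
Local Open Scope classical_set_scope.

(* The substance is that [alpha M] is finitely generated, as the preradical axioms
   require; this is the Hopkins-Levitzki theorem: a left artinian ring is left
   noetherian. Its Jacobson radical [J] is an irredundant finite intersection of
   maximal left ideals [M_l], separated by elements [e_l] lying in every [M_j] but
   [M_l] and congruent to 1 modulo [M_l], and [J] is nilpotent. Every left ideal
   between [J^(i+1)] and [J^i] is then, modulo [J^(i+1)], a sum of simple cyclic
   pieces, so a strictly increasing chain of them would build an infinite direct sum
   and contradict DCC; hence ACC climbs from [J^N = 0] up to [R].

   Then [alpha (top (alpha M))] is everything, as [alpha (alpha M) = alpha M] and
   [alpha] is carried along the projection [alpha M -> top (alpha M)]. If a nonzero
   [t] of [top (alpha M)] lay in its [beta] part, take a maximal submodule [S] avoiding
   a lift of [t]: the simple module [alpha M / S] is generated by the image of [t], so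
   it lies in [T_beta], hence in [F_alpha], and yet contains that image in its [alpha]
   part. *)

Definition stationary T (C : nat -> set T) :=
  exists N, forall n, (N <= n)%N -> C n `<=` C N.

Lemma chain_subset T (C : nat -> set T) : (forall n, C n `<=` C n.+1) ->
  {homo C : m n / (m <= n)%N >-> m `<=` n}.
Proof.
move=> C_incr m n /subnK <-; elim: (n - m)%N => [|d IH] //.
by rewrite addSn; apply: subset_trans IH (C_incr _).
Qed.

Lemma nonstationary_strict_subchain T (C : nat -> set T) :
  (forall n, C n `<=` C n.+1) -> ~ stationary C ->
  exists h : nat -> nat, (forall n, (h n <= h n.+1)%N) /\
    forall n, exists2 x, C (h n.+1) x & ~ C (h n) x.
Proof.
move=> C_incr nstat.
have /choice [g gP] : forall N, exists n, (N <= n)%N /\ exists2 x, C n x & ~ C N x.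
  move=> N; apply: contrapT => hN; apply: nstat; exists N => n Nn x Cnx.
  by apply: contrapT => nCNx; apply: hN; exists n; split => //; exists x.
by exists (fun m => iter m g 0%N); split => n; rewrite iterS; case: (gP (iter n g 0%N)).
Qed.

Section ModularLaw.
Variables (V : zmodType) (B : set V) (C : nat -> set V).
Hypotheses (B0 : B 0) (C_incr : forall n, C n `<=` C n.+1)
  (C_sub : forall n x y, C n x -> C n y -> C n (x - y)).

Lemma stationary_meet_add :
  stationary (fun n => C n `&` B) -> stationary (fun n => [set c + b | c in C n & b in B]) ->
  stationary C.
Proof.
have C_add n x y : C n x -> C n y -> C n (x + y).
  move=> Cx Cy; have C0 : C n 0 by rewrite -(subrr x); apply: C_sub.
  by rewrite -[y]opprK -[- y]sub0r; apply: C_sub => //; apply: C_sub.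
move=> [N1 stat1] [N2 stat2]; exists (maxn N1 N2) => n le_n x Cnx.
have le1 := leq_trans (leq_maxl N1 N2) le_n; have le2 := leq_trans (leq_maxr N1 N2) le_n.
have CBx : [set c + b | c in C n & b in B] x by exists x => //; exists 0; rewrite ?addr0.
have [c CN2c [b Bb xE]] := stat2 n le2 x CBx.
have Cnc : C n c := chain_subset C_incr le2 CN2c.
have [CN1b _] : (C N1 `&` B) b.
  by apply: (stat1 n le1); split; rewrite // -(addKr c b) xE addrC; apply: C_sub.
rewrite -xE; apply: C_add.
- exact: (chain_subset C_incr (leq_maxr N1 N2) CN2c).
- exact: (chain_subset C_incr (leq_maxl N1 N2) CN1b).
Qed.
End ModularLaw.

Section LeftIdeals.
Variable R : pzRingType.
Implicit Types (I J : set R) (a b c r x y : R).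

Lemma left_ideal0 I : left_ideal I -> I 0.
Proof. by case. Qed.

Lemma left_idealD I x y : left_ideal I -> I x -> I y -> I (x + y).
Proof. by case=> _ + _; apply. Qed.

Lemma left_idealMl I r x : left_ideal I -> I x -> I (r * x).
Proof. by case=> _ _; apply. Qed.

Lemma left_idealB I x y : left_ideal I -> I x -> I y -> I (x - y).
Proof. by move=> hI Ix Iy; rewrite -[- y]mulN1r; apply: left_idealD => //; apply: left_idealMl. Qed.

Lemma left_ideal_sum I n (P : pred 'I_n) (F : 'I_n -> R) : left_ideal I ->
  (forall i, P i -> I (F i)) -> I (\sum_(i < n | P i) F i).
Proof.
by move=> hI hF; apply: (big_ind I) => [|x y|]; [exact: left_ideal0 hI | exact: left_idealD hI |].
Qed.

Lemma left_idealT : left_ideal [set: R].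
Proof. by []. Qed.

Lemma left_idealI I J : left_ideal I -> left_ideal J -> left_ideal (I `&` J).
Proof.
move=> hI hJ; split; first by split; apply: left_ideal0.
- by move=> x y [Ix Jx] [Iy Jy]; split; apply: left_idealD.
- by move=> r x [Ix Jx]; split; apply: left_idealMl.
Qed.

Lemma left_ideal_add I J : left_ideal I -> left_ideal J ->
  left_ideal [set a + b | a in I & b in J].
Proof.
move=> hI hJ; split.
- by exists 0; [exact: left_ideal0 | exists 0; [exact: left_ideal0 | rewrite addr0]].
- move=> _ _ [a Ia [b Jb <-]] [a' Ia' [b' Jb' <-]].
  exists (a + a'); first exact: left_idealD.
  by exists (b + b'); [exact: left_idealD | rewrite addrACA].
- move=> r _ [a Ia [b Jb <-]]; exists (r * a); first exact: left_idealMl.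
  by exists (r * b); [exact: left_idealMl | rewrite mulrDr].
Qed.

Lemma left_ideal_mulr I b : left_ideal I -> left_ideal [set a * b | a in I].
Proof.
move=> hI; split.
- by exists 0; [exact: left_ideal0 | rewrite mul0r].
- by move=> _ _ [a Ia <-] [a' Ia' <-]; exists (a + a'); [exact: left_idealD | rewrite mulrDl].
- by move=> r _ [a Ia <-]; exists (r * a); [exact: left_idealMl | rewrite mulrA].
Qed.

Lemma left_ideal_bigcap T (P : set T) (F : T -> set R) :
  (forall i, P i -> left_ideal (F i)) -> left_ideal (\bigcap_(i in P) F i).
Proof.
move=> hF; split.
- by move=> i Pi; exact: left_ideal0 (hF i Pi).
- by move=> x y Fx Fy i Pi; apply: left_idealD (hF i Pi) (Fx i Pi) (Fy i Pi).
- by move=> r x Fx i Pi; apply: left_idealMl (hF i Pi) (Fx i Pi).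
Qed.

Lemma left_ideal_bigcup T (P : set T) (F : T -> set R) : P !=set0 ->
  (forall i, P i -> left_ideal (F i)) ->
  (forall i j, P i -> P j -> exists2 k, P k & F i `|` F j `<=` F k) ->
  left_ideal (\bigcup_(i in P) F i).
Proof.
move=> [i0 Pi0] hF directed; split.
- by exists i0 => //; exact: left_ideal0 (hF i0 Pi0).
- move=> x y [i Pi Fx] [j Pj Fy]; have [k Pk sub] := directed i j Pi Pj.
  by exists k => //; apply: left_idealD (hF k Pk) _ _; apply: sub; [left | right].
- by move=> r x [i Pi Fx]; exists i => //; apply: left_idealMl (hF i Pi) Fx.
Qed.


(* [L + R r = R] for every [r] outside [L] *)
Definition maximal_left_ideal L :=
  [/\ left_ideal L, ~ L 1 & forall r, ~ L r -> exists s, L (1 - s * r)].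

Lemma exists_maximal_left_ideal I : left_ideal I -> ~ I 1 ->
  exists2 L, maximal_left_ideal L & I `<=` L.
Proof.
move=> hI nI1; pose proper_above L := [/\ left_ideal L, I `<=` L & ~ L 1].
(* [set0] is allowed only as the union of the empty chain. *)
have [L [[L0|[hL IL nL1]] Lmax]] : exists L, (L = set0 \/ proper_above L) /\
    forall L', L `<` L' -> ~ (L' = set0 \/ proper_above L').
- apply: Zorn_bigcup => F FP Ftot.
  have [[x [X FX Xx]]|U0] := pselect (\bigcup_(X in F) X !=set0); last first.
    by left; apply/seteqP; split => // y Uy; apply: U0; exists y.
  pose G := F `&` [set X | X !=set0].
  have GP Y : G Y -> proper_above Y by case=> /FP [-> [y] //|].
  have UG : \bigcup_(X in F) X = \bigcup_(X in G) X.
    by apply/seteqP; split=> y [Y GY Yy]; exists Y => //; [split => //; exists y | case: GY].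
  have GX : G X by split => //; exists x.
  right; rewrite UG; split.
  + apply: left_ideal_bigcup => [|Y /GP []//|Y Z GY GZ]; first by exists X.
    have [YZ|ZY] := Ftot Y Z GY.1 GZ.1.
    * by exists Z => // y [/YZ|].
    * by exists Y => // y [|/ZY].
  + by move=> y Iy; exists X => //; case: (GP X GX) => _ /(_ y Iy).
  + by case=> Y /GP [].
- exfalso; apply: (Lmax I); last by right; split.
  by rewrite L0; split => // /(_ 0 (left_ideal0 hI)).
exists L => //; split => // r nLr.
pose L' := [set a + b | a in L & b in [set s * r | s in setT]].
have LL' : L `<=` L'.
  by move=> a La; exists a => //; exists 0; [exists 0; rewrite ?mul0r | rewrite addr0].
have [[a La [_ [s _ <-] a1]]|nL'1] := pselect (L' 1).
  by exists s; rewrite -a1 addrK.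
exfalso; apply: (Lmax L'); last first.
  by right; split; [exact/left_ideal_add/left_ideal_mulr | exact: subset_trans LL' |].
split => // L'L; apply/nLr/L'L; exists 0; first exact: left_ideal0 hL.
by exists r; [exists 1; rewrite ?mul1r | rewrite add0r].
Qed.

Definition jacobson : set R := \bigcap_(L in maximal_left_ideal) L.

Lemma left_ideal_jacobson : left_ideal jacobson.
Proof. by apply: left_ideal_bigcap => L []. Qed.

Lemma maximal_left_ideal_mulr L r : maximal_left_ideal L -> ~ L r ->
  maximal_left_ideal [set a | L (a * r)].
Proof.
move=> [hL _ Lmax] nLr; split => [||a nLar].
- split; first by rewrite /= mul0r; exact: left_ideal0 hL.
  + by move=> x y Lx Ly; rewrite /= mulrDl; exact: left_idealD hL Lx Ly.
  + by move=> t x Lx; rewrite /= -mulrA; exact: left_idealMl hL Lx.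
- by rewrite /= mul1r.
- have [s Ls] := Lmax _ nLar; exists (r * s).
  by rewrite /= mulrBl mul1r -!mulrA -{1}[r]mulr1 -mulrBr; exact: left_idealMl hL Ls.
Qed.

Lemma jacobson_mulr c r : jacobson c -> jacobson (c * r).
Proof.
move=> Jc L mL; have [hL _ _] := mL; have [Lr|nLr] := pselect (L r).
  exact: left_idealMl hL Lr.
exact: Jc _ (maximal_left_ideal_mulr mL nLr).
Qed.

Lemma jacobson_left_unit c : jacobson c -> exists u, u * (1 - c) = 1.
Proof.
move=> Jc; pose I := [set u * (1 - c) | u in setT].
have [[u _ u1]|nI1] := pselect (I 1); first by exists u.
have [L mL IL] := exists_maximal_left_ideal (left_ideal_mulr _ left_idealT) nI1.
have [hL nL1 _] := mL; exfalso; apply: nL1; rewrite -(subrK c 1).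
by apply: left_idealD hL (IL _ _) (Jc L mL); exists 1; rewrite ?mul1r.
Qed.

(* The cyclic module [R y] is simple modulo [B], so it meets [C] only in [B]. *)
Lemma maximal_cyclic_meet L B C y : maximal_left_ideal L -> left_ideal C ->
  B `<=` C -> (forall r, L r -> B (r * y)) -> ~ C y ->
  forall r, C (r * y) -> B (r * y).
Proof.
move=> [_ _ Lmax] hC BC LyB nCy r Cry; apply: contrapT => nBry.
have nLr : ~ L r by move=> Lr; apply/nBry/LyB.
have [s Ls] := Lmax r nLr; apply: nCy.
have -> : y = (1 - s * r) * y + s * (r * y) by rewrite mulrBl mul1r mulrA subrK.
exact: left_idealD hC (BC _ (LyB _ Ls)) (left_idealMl s hC Cry).
Qed.

Definition left_ideal_acc A := forall C : nat -> set R,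
  (forall n, left_ideal (C n)) -> (forall n, C n `<=` C n.+1) ->
  (forall n, C n `<=` A) -> stationary C.

Inductive ideal_mul (A B : set R) : set R :=
| ideal_mul0 : ideal_mul A B 0
| ideal_mulD a b y : A a -> B b -> ideal_mul A B y -> ideal_mul A B (a * b + y).

Lemma left_ideal_mul A B : left_ideal A -> left_ideal (ideal_mul A B).
Proof.
move=> hA; split; first exact: ideal_mul0.
- move=> x y; elim=> [|a b z Aa Bb _ IH] My; first by rewrite add0r.
  by rewrite -addrA; apply: ideal_mulD => //; apply: IH.
- move=> r x; elim=> [|a b z Aa Bb _ IH]; first by rewrite mulr0; apply: ideal_mul0.
  by rewrite mulrDr mulrA; apply: ideal_mulD => //; apply: left_idealMl.
Qed.

Lemma ideal_mul_sub A B : left_ideal A -> (forall a b, A a -> B b -> A (a * b)) ->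
  ideal_mul A B `<=` A.
Proof.
move=> hA AB x; elim=> [|a b z Aa Bb _ IH]; first exact: left_ideal0 hA.
exact: left_idealD hA (AB _ _ Aa Bb) IH.
Qed.

Lemma ideal_mul_mulr A B y c : left_ideal B -> ideal_mul A B y -> B c ->
  ideal_mul A B (y * c).
Proof.
move=> hB My Bc; elim: My => [|a b z Aa Bb _ IH]; first by rewrite mul0r; apply: ideal_mul0.
by rewrite mulrDl -mulrA; apply: ideal_mulD => //; apply: left_idealMl.
Qed.

Lemma ideal_mul_neq0 A B y b : ideal_mul A B y -> y * b <> 0 ->
  exists a c, [/\ A a, B c & a * (c * b) <> 0].
Proof.
elim=> [|a c z Aa Bc _ IH]; first by rewrite mul0r.
rewrite mulrDl -mulrA => acbz.
have [acb0|] := eqVneq (a * (c * b)) 0; last by move/eqP; exists a, c.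
by apply: IH => zb0; apply: acbz; rewrite acb0 zb0 addr0.
Qed.

Fixpoint ideal_pow J n : set R := if n is n.+1 then ideal_mul (ideal_pow J n) J else setT.

Section IdealPow.
Variable J : set R.
Hypotheses (hJ : left_ideal J) (J_mulr : forall c r, J c -> J (c * r)).

Lemma left_ideal_pow n : left_ideal (ideal_pow J n).
Proof. by elim: n => //= n IH; apply: left_ideal_mul. Qed.

Lemma ideal_pow_mulr n a c : ideal_pow J n a -> J c -> ideal_pow J n (a * c).
Proof. by case: n => //= n; apply: ideal_mul_mulr. Qed.

Lemma ideal_pow_decr n : ideal_pow J n.+1 `<=` ideal_pow J n.
Proof. by apply: ideal_mul_sub; [exact: left_ideal_pow | move=> a b; apply: ideal_pow_mulr]. Qed.

Lemma ideal_pow_mull n c y : J c -> ideal_pow J n y -> ideal_pow J n.+1 (c * y).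
Proof.
elim: n y => [|n IH] y Jc /= Ny.
  rewrite -[c * y]mul1r -[_ * _]addr0.
  by apply: ideal_mulD => //; [apply: J_mulr | apply: ideal_mul0].
elim: Ny => [|a b z Na Jb _ IHz]; first by rewrite mulr0; apply: ideal_mul0.
by rewrite mulrDr mulrA; apply: ideal_mulD => //; apply: IH.
Qed.

End IdealPow.

End LeftIdeals.

Arguments jacobson {R}.

Section Artinian.
Variable R : pzRingType.
Hypothesis artR : left_artinian R.

Lemma artinian_minimal (F : set (set R)) : F `<=` @left_ideal R -> F !=set0 ->
  exists2 I, F I & forall J, F J -> ~ J `<` I.
Proof.
move=> Fideal [I0 FI0]; apply: contrapT => noMin.
have /choice [f fP] : forall I : {I | F I}, exists J : {J | F J}, sval J `<` sval I.
  move=> [I FI]; apply: contrapT => nJ; apply: noMin; exists I => // J FJ JI.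
  by apply: nJ; exists (exist _ J FJ).
pose ch n := sval (iter n f (exist _ I0 FI0)).
have [N chN] := artR (fun n => Fideal _ (svalP _)) (fun n => (fP _).1 : ch n.+1 `<=` ch n).
have [_] := fP (iter N f (exist _ I0 FI0)); apply.
by rewrite -/(ch N.+1) (chN N.+1 (leqnSn N)).
Qed.

Lemma no_simple_chain (B : set R) (C : nat -> set R) (y : nat -> R) :
  left_ideal B -> (forall n, left_ideal (C n)) -> (forall n, C n `<=` C n.+1) ->
  (forall n, B `<=` C n) -> (forall n, C n.+1 (y n)) -> (forall n, ~ C n (y n)) ->
  (forall n r, C n (r * y n) -> B (r * y n)) -> False.
Proof.
move=> hB hC C_incr BC Cy nCy simple.
(* [D n = B + R y_n + R y_(n+1) + ...] decreases, so by DCC [y_N] lies in [D N.+1];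
   but the sum is direct modulo [B], so [D N.+1] meets [C N.+1] only in [B]. *)
pose Ry n := [set r * y n | r in setT].
pose fix E n j := if j is j.+1 then [set u + p | u in E n j & p in Ry (j + n)%N] else B.
have hE n j : left_ideal (E n j).
  by elim: j => //= j IH; apply: left_ideal_add => //; apply: left_ideal_mulr.
have EC n j : E n j `<=` C (j + n).
  elim: j => [|j IH] /= z; first exact: BC.
  move=> [u /IH Cu [_ [r _ <-] <-]].
  exact: left_idealD (hC _) (C_incr _ _ Cu) (left_idealMl r (hC _) (Cy _)).
have EB n j z : E n j z -> C n z -> B z.
  elim: j z => [//|j IH] _ /= [u Eu [_ [r _ <-] <-]] Cz.
  have Cu := EC n j u Eu.
  have Bry : B (r * y (j + n)).
    apply: simple; rewrite -(addKr u (r * y _)) [- u + _]addrC.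
    exact: left_idealB (hC _) (chain_subset C_incr (leq_addl j n) Cz) Cu.
  apply: (left_idealD hB _ Bry); apply: IH Eu _.
  by rewrite -(addrK (r * y (j + n)) u); exact: left_idealB (hC n) Cz (BC n _ Bry).
have E_incr n j : E n j `<=` E n j.+1.
  by move=> z Ez; exists z => //; exists 0; [exists 0; rewrite ?mul0r | rewrite addr0].
have E_shift n j : E n.+1 j `<=` E n j.+1.
  elim: j => [|j IH] z /=.
    by move=> Bz; exists z => //; exists 0; [exists 0; rewrite ?mul0r | rewrite addr0].
  by move=> [u Eu [p Rp <-]]; exists u; [exact: IH | exists p; rewrite // addSnnS].
pose D n := \bigcup_(j in setT) E n j.
have hD n : left_ideal (D n).
  apply: left_ideal_bigcup; [by exists 0%N | by move=> j _; apply: hE | move=> i j _ _].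
  exists (maxn i j) => // z [] Ez.
  - exact: (chain_subset (E_incr n) (leq_maxl i j) Ez).
  - exact: (chain_subset (E_incr n) (leq_maxr i j) Ez).
have [N DN] := artR hD (fun n z '(ex_intro2 j _ Ez) => ex_intro2 _ _ j.+1 I (E_shift n j z Ez)).
have DNy : D N (y N).
  exists 1%N => //; exists 0; first exact: left_ideal0 hB.
  by exists (y N); [exists 1; rewrite ?mul1r | rewrite add0r].
rewrite -(DN N.+1 (leqnSn N)) in DNy; have [j _ Ej] := DNy.
exact/(nCy N)/BC/(EB _ _ _ Ej)/Cy.
Qed.

Lemma jacobson_nilpotent : exists N, ideal_pow (@jacobson R) N `<=` [set 0].
Proof.
(* Nakayama: were [J^N = J^(N+1)] nonzero, a minimal [L] with [J^N L <> 0] would be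
   [J b] for some [b] in [L], so [b = c b] with [c] in [J], and [1 - c] is invertible. *)
have hJ := left_ideal_jacobson R.
have [N powN] := artR (left_ideal_pow jacobson) (ideal_pow_decr hJ).
exists N => y0 Ny0; apply: contrapT => y0_neq0.
pose F : set (set R) := [set L | left_ideal L /\
  exists y b, [/\ ideal_pow (@jacobson R) N y, L b & y * b <> 0]].
have [L [hL [y [b [Ny Lb yb]]]] Lmin] : exists2 L, F L & forall L', F L' -> ~ L' `<` L.
  apply: artinian_minimal => [L []//|]; exists setT; split => //.
  by exists y0, 1; rewrite mulr1.
pose Jb := [set c * b | c in jacobson].
have FJb : F Jb.
  split; first exact: left_ideal_mulr hJ.
  rewrite -(powN N.+1 (leqnSn N)) in Ny.
  have [a [c [Na Jc acb]]] := ideal_mul_neq0 Ny yb.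
  by exists a, (c * b); split => //; exists c.
have JbL : Jb `<=` L by move=> _ [c Jc <-]; apply: left_idealMl.
have [c Jc cb] : Jb b by apply: contrapT => nJb; apply: (Lmin Jb FJb); split => // /(_ b Lb).
have [u u1] := jacobson_left_unit Jc.
apply: yb; suff -> : b = 0 by rewrite mulr0.
by rewrite -[b]mul1r -u1 -mulrA mulrBl mul1r cb subrr mulr0.
Qed.

Lemma jacobson_finite_bigcap : exists k (M : nat -> set R),
  (forall j, (j < k)%N -> maximal_left_ideal (M j)) /\
  \bigcap_(j < k) M j `<=` jacobson.
Proof.
pose F : set (set R) := [set K | exists k M,
  (forall j, (j < k)%N -> maximal_left_ideal (M j)) /\ K = \bigcap_(j < k) M j].
have [_ [k [M [maxM ->]]] Kmin] : exists2 K, F K & forall K', F K' -> ~ K' `<` K.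
  apply: artinian_minimal.
    by move=> _ [k [M [maxM ->]]]; apply: left_ideal_bigcap => j /maxM [].
  by exists setT, 0%N, (fun _ => setT); split => //; apply/seteqP; split.
exists k, M; split => // x Mx L mL.
pose M' j := if j == k then L else M j.
have F' : F (\bigcap_(j < k.+1) M' j).
  exists k.+1, M'; split => // j; rewrite ltnS leq_eqVlt /M'.
  by case: eqP => [_ _|_ /= jk]; [exact: mL | exact: maxM].
have sub : \bigcap_(j < k.+1) M' j `<=` \bigcap_(j < k) M j.
  by move=> z Mz j /= jk; have := Mz j (ltnW jk); rewrite /M' ifN // neq_ltn jk.
have : \bigcap_(j < k) M j `<=` \bigcap_(j < k.+1) M' j.
  by apply: contrapT => nsub; apply: (Kmin _ F').
by move=> /(_ x Mx k (ltnSn k)); rewrite /M' eqxx.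
Qed.

Lemma jacobson_irredundant_bigcap : exists k (M : nat -> set R) (e : nat -> R),
  [/\ forall j, (j < k)%N -> maximal_left_ideal (M j),
      jacobson = \bigcap_(j < k) M j,
      forall l j, (l < k)%N -> (j < k)%N -> j != l -> M j (e l) &
      forall l, (l < k)%N -> M l (1 - e l)].
Proof.
have exk : exists k, `[< exists M : nat -> set R,
    (forall j, (j < k)%N -> maximal_left_ideal (M j)) /\ \bigcap_(j < k) M j `<=` jacobson >].
  by have [k [M kM]] := jacobson_finite_bigcap; exists k; apply/asboolP; exists M.
case: (ex_minnP exk) => k /asboolP [M [maxM MJ]] kmin.
have JM : jacobson = \bigcap_(j < k) M j.
  by apply/seteqP; split => // x Jx j jk; exact: Jx _ (maxM j jk).
(* By minimality of [k], no [M l] can be dropped from the intersection. *)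
have irredundant l : (l < k)%N ->
    exists f, (forall j, (j < k)%N -> j != l -> M j f) /\ ~ M l f.
  move=> lk; apply: contrapT => nf.
  suff /kmin : `[< exists M' : nat -> set R,
      (forall j, (j < k.-1)%N -> maximal_left_ideal (M' j)) /\
      \bigcap_(j < k.-1) M' j `<=` jacobson >] by lia.
  apply/asboolP; exists (M \o bump l); split => [j jk|x xM].
    by apply: maxM; rewrite /bump; lia.
  have xMj j : (j < k)%N -> j != l -> M j x.
    move=> jk jl; rewrite -(unbumpK (h := l) (x := j)) ?inE //.
    by apply: xM; rewrite /= /unbump; lia.
  apply: MJ => j jk; have [->|] := eqVneq j l; last exact: xMj.
  by apply: contrapT => nMlx; apply: nf; exists x.
have /choice [e eP] : forall l, exists e, (l < k)%N ->
    (forall j, (j < k)%N -> j != l -> M j e) /\ M l (1 - e).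
  move=> l; have [lk|] := ltnP l k; last by exists 0; lia.
  have [f [Mf nMlf]] := irredundant l lk; have [_ _ Mlmax] := maxM l lk.
  have [s Ms] := Mlmax f nMlf; exists (s * f) => _; split => // j jk jl.
  by have [hMj _ _] := maxM j jk; exact: (left_idealMl s hMj (Mf j jk jl)).
exists k, M, e; split => // [l j lk jk jl|l lk]; [exact: (eP l lk).1 | exact: (eP l lk).2].
Qed.

Section Layers.
Variables (k : nat) (M : nat -> set R) (e : nat -> R).
Hypotheses (maxM : forall j, (j < k)%N -> maximal_left_ideal (M j))
  (jacobsonE : jacobson = \bigcap_(j < k) M j)
  (Me : forall l j, (l < k)%N -> (j < k)%N -> j != l -> M j (e l))
  (Me1 : forall l, (l < k)%N -> M l (1 - e l)).

Lemma jacobson_mul_e l r : (l < k)%N -> M l r -> jacobson (r * e l).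
Proof.
move=> lk Mlr; rewrite jacobsonE => j jk; have [hMj _ _] := maxM jk.
move: hMj; have [-> hMl|jl hMj] := eqVneq j l.
  have -> : r * e l = r - r * (1 - e l) by rewrite mulrBr mulr1 opprB addrC subrK.
  exact: (left_idealB hMl Mlr (left_idealMl r hMl (Me1 lk))).
exact: (left_idealMl r hMj (Me lk jk jl)).
Qed.

Lemma jacobson_one_sub_sum_e : jacobson (1 - \sum_(l < k) e l).
Proof.
rewrite jacobsonE => j jk; have [hMj _ _] := maxM jk.
rewrite (bigD1 (Ordinal jk)) //= opprD addrA.
apply: (left_idealB hMj (Me1 jk)); apply: left_ideal_sum hMj _ => i ij.
by apply: Me => //; rewrite eq_sym -val_eqE in ij.
Qed.

Lemma exists_e_mul_notin (A B C : set R) x : left_ideal C -> B `<=` C ->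
  (forall c a, jacobson c -> A a -> B (c * a)) -> A x -> ~ C x ->
  exists2 l, (l < k)%N & ~ C (e l * x).
Proof.
move=> hC BC JAB Ax nCx; apply: contrapT => nl; apply: nCx.
rewrite -[x]mul1r -(subrK (\sum_(l < k) e l) 1) mulrDl.
apply: (left_idealD hC (BC _ (JAB _ _ jacobson_one_sub_sum_e Ax))).
rewrite mulr_suml; apply: left_ideal_sum hC _ => l _.
by apply: contrapT => nC; apply: nl; exists l.
Qed.

Lemma layer_stationary (B A : set R) (C : nat -> set R) : left_ideal B ->
  (forall c a, jacobson c -> A a -> B (c * a)) -> (forall n, left_ideal (C n)) ->
  (forall n, C n `<=` C n.+1) -> (forall n, B `<=` C n) -> (forall n, C n `<=` A) ->
  stationary C.
Proof.
move=> hB JAB hC C_incr BC CA; apply: contrapT.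
move=> /(nonstationary_strict_subchain C_incr) [h [h_incr strict]].
have /choice [yl yP] : forall n, exists yl : R * nat,
    [/\ C (h n.+1) yl.1, ~ C (h n) yl.1, (yl.2 < k)%N & forall r, M yl.2 r -> B (r * yl.1)].
  move=> n; have [x Cx nCx] := strict n.
  have [l lk nC] := exists_e_mul_notin (hC _) (BC _) JAB (CA _ _ Cx) nCx.
  exists (e l * x, l); split => //; first exact: (left_idealMl _ (hC _) Cx).
  by move=> r Mlr; rewrite mulrA; apply: JAB (CA _ _ Cx); apply: jacobson_mul_e.
apply: (@no_simple_chain B (C \o h) (fun n => (yl n).1) hB) => [n|n|n|n|n|n r].
- exact: hC.
- exact: (chain_subset C_incr (h_incr n)).
- exact: BC.
- by case: (yP n).
- by case: (yP n).
- case: (yP n) => _ nC lk LB.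
  exact: (maximal_cyclic_meet (maxM lk) (hC _) (BC _) LB nC).
Qed.

Lemma left_ideal_acc_pow i : left_ideal_acc (ideal_pow (@jacobson R) i.+1) ->
  left_ideal_acc (ideal_pow (@jacobson R) i).
Proof.
move=> acc1 C hC C_incr CA; pose B := ideal_pow (@jacobson R) i.+1.
have hB : left_ideal B := left_ideal_pow _ _.
apply: (stationary_meet_add (left_ideal0 hB) C_incr).
- by move=> n x y; apply: left_idealB (hC n).
- apply: acc1 => n; first exact: left_idealI.
  + by move=> x [/C_incr Cx Bx].
  + by move=> x [].
- apply: (@layer_stationary B (ideal_pow (@jacobson R) i)) => // [c a Jc|n|n|n|n].
  + exact: (ideal_pow_mull (@jacobson_mulr R) Jc).
  + exact: left_ideal_add.
  + by move=> _ [c Cc [b Bb <-]]; exists c; [exact: C_incr | exists b].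
  + by move=> b Bb; exists 0; [exact: left_ideal0 (hC n) | exists b; rewrite ?add0r].
  + move=> _ [c Cc [b Bb <-]].
    have Ai_b := ideal_pow_decr (left_ideal_jacobson R) Bb.
    exact: (left_idealD (left_ideal_pow _ _) (CA n c Cc) Ai_b).
Qed.

End Layers.

Lemma artinian_noetherian : left_ideal_acc [set: R].
Proof.
have [k [M [e [maxM JE Me Me1]]]] := jacobson_irredundant_bigcap.
have [N powN] := jacobson_nilpotent.
have accN : left_ideal_acc (ideal_pow (@jacobson R) N).
  move=> C hC _ CA; exists 0%N => n _ x Cnx.
  by rewrite (powN x (CA n x Cnx)); exact: left_ideal0 (hC 0%N).
by elim: N {powN} accN => // N IH /(left_ideal_acc_pow maxM JE Me Me1).
Qed.

End Artinian.

Section Span.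
Variables (R : pzRingType) (V : lmodType R).

Lemma submodB (A : set V) x y : submod A -> A x -> A y -> A (x - y).
Proof. by move=> hA; apply: (subB (S := Submodule hA)). Qed.

Lemma submodI (A B : set V) : submod A -> submod B -> submod (A `&` B).
Proof.
move=> hA hB; split; first by split; [exact: (sub0 hA) | exact: (sub0 hB)].
- by move=> x y [Ax Bx] [Ay By]; split; [exact: (subD hA Ax Ay) | exact: (subD hB Bx By)].
- by move=> a x [Ax Bx]; split; [exact: (subZ hA a Ax) | exact: (subZ hB a Bx)].
Qed.

Definition span (s : seq V) : set V :=
  [set v | exists c : nat -> R, v = \sum_(i < size s) c i *: s`_i].

Lemma span_submod s : submod (span s).
Proof.
split.
- by exists (fun _ => 0); rewrite big1 // => i _; rewrite scale0r.
- move=> _ _ [c ->] [c' ->]; exists (fun i => c i + c' i).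
  by rewrite -big_split; apply: eq_bigr => i _; rewrite scalerDl.
- move=> a _ [c ->]; exists (fun i => a * c i).
  by rewrite scaler_sumr; apply: eq_bigr => i _; rewrite scalerA.
Qed.

Lemma span_nil v : span [::] v -> v = 0.
Proof. by case=> c ->; rewrite big_ord0. Qed.

Lemma span_cons x s v : span (x :: s) v <-> exists r y, span s y /\ v = r *: x + y.
Proof.
split=> [[c ->]|[r [y [[c ->] ->]]]].
  rewrite big_ord_recl; exists (c 0%N), (\sum_(i < size s) c i.+1 *: s`_i).
  by split; [exists (fun i => c i.+1) | congr (_ + _); apply: eq_bigr].
exists (fun i => if i is i'.+1 then c i' else r).
by rewrite big_ord_recl; congr (_ + _); apply: eq_bigr.
Qed.

Definition submod_acc (A : set V) := forall C : nat -> set V,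
  (forall n, submod (C n)) -> (forall n, C n `<=` C n.+1) ->
  (forall n, C n `<=` A) -> stationary C.

Hypothesis noethR : left_ideal_acc [set: R].

Lemma submod_acc_span s : submod_acc (span s).
Proof.
elim: s => [|x s IH] C hC C_incr CA.
  by exists 0%N => n _ v /CA /span_nil ->; exact: (sub0 (hC 0%N)).
apply: (stationary_meet_add (sub0 (span_submod s)) C_incr).
- by move=> n u v; apply: submodB.
- apply: IH => n; first exact: submodI (span_submod s).
  + by move=> v [/C_incr Cv sv].
  + by move=> v [].
pose coef n := [set r | exists2 y, span s y & C n (r *: x + y)].
have hcoef n : left_ideal (coef n).
  split; first exists 0; first exact: (sub0 (span_submod s)).
    by rewrite scale0r addr0; exact: (sub0 (hC n)).
  - move=> r r' [y sy Cy] [y' sy' Cy']; exists (y + y'); first exact: (subD (span_submod s) sy sy').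
    by rewrite scalerDl addrACA; exact: (subD (hC n) Cy Cy').
  - move=> a r [y sy Cy]; exists (a *: y); first exact: (subZ (span_submod s) a sy).
    by rewrite -scalerA -scalerDr; exact: (subZ (hC n) a Cy).
have coef_incr n : coef n `<=` coef n.+1.
  by move=> r [y sy Cy]; exists y => //; apply: C_incr.
have [N coefN] := noethR hcoef coef_incr (fun _ _ _ => I).
exists N => n Nn _ [c Cnc [y sy <-]].
have [r [y' [sy' cE]]] := (span_cons x s c).1 (CA n c Cnc).
have coefr : coef n r by exists y' => //; rewrite -cE.
have [y'' sy'' CNr] := coefN n Nn r coefr.
exists (r *: x + y'') => //; exists (y' - y'' + y).
  exact: (subD (span_submod s) (submodB (span_submod s) sy' sy'') sy).
by rewrite cE addrA [y' - y'']addrC addrA addrK.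
Qed.

Lemma fg_span : fg V -> exists s, forall v, span s v.
Proof.
move=> [n [g gP]]; exists (mkseq (fun i => oapp g 0 (insub i : option 'I_n)) n) => v.
have [c ->] := gP v; exists (fun i => oapp c 0 (insub i : option 'I_n)).
by rewrite size_mkseq; apply: eq_bigr => i _; rewrite nth_mkseq // valK.
Qed.

Lemma fg_subm_of_span (S : submodule V) s : (forall x, x \in s -> S x) -> S `<=` span s ->
  fg (subm S).
Proof.
move=> sS Ss; pose g (i : 'I_(size s)) : subm S := exist _ s`_i (sS _ (mem_nth 0 (ltn_ord i))).
exists (size s), g => v; have [c vE] := Ss _ (proj2_sig v).
exists (fun i => c i); apply: subm_inj.
by rewrite vE (big_morph (@proj1_sig _ _) (id1 := 0) (op1 := +%R)).
Qed.

Lemma fg_subm (S : submodule V) : fg V -> fg (subm S).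
Proof.
move=> /fg_span [s0 span_s0]; apply: contrapT => nfg.
have /choice [next nextP] : forall s : seq V,
    exists x, (forall y, y \in s -> S y) -> S x /\ ~ span s x.
  move=> s; have [sS|] := pselect (forall x, x \in s -> S x); last by exists 0.
  suff [x Sx nsx] : exists2 x, S x & ~ span s x by exists x.
  apply: contrapT => nx; apply/nfg/(fg_subm_of_span sS) => x Sx.
  by apply: contrapT => nsx; apply: nx; exists x.
pose ss m := iter m (fun s => next s :: s) [::].
have ssS m x : x \in ss m -> S x.
  elim: m x => [//|m IH] x; rewrite inE => /orP [/eqP -> | /IH //].
  exact: (nextP _ IH).1.
have ss_incr m : span (ss m) `<=` span (ss m.+1).
  by move=> v sv; apply/span_cons; exists 0, v; rewrite scale0r add0r.
have [N ssN] :=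
  submod_acc_span (s := s0) (fun m => span_submod (ss m)) ss_incr (fun m v _ => span_s0 v).
apply: (nextP _ (ssS N)).2; apply: (ssN N.+1 (leqnSn N)); apply/span_cons.
by exists 1, 0; rewrite scale1r addr0; split => //; exact: (sub0 (span_submod _)).
Qed.

End Span.

Lemma fg_surj (R : pzRingType) (U W : lmodType R) (f : {linear U -> W}) :
  fg U -> (forall w, exists u, w = f u) -> fg W.
Proof.
move=> [n [s sP]] f_surj; exists n, (fun i => f (s i)) => w.
have [u ->] := f_surj w; have [c ->] := sP u.
by exists c; rewrite linear_sum; apply: eq_bigr => i _; rewrite linearZ.
Qed.

Section Quotients.
Variables (R : pzRingType) (V : lmodType R).

Section Projection.
Variable S : submodule V.

Lemma mkq_is_linear : linear (mkq S).
Proof.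
move=> a u v; change (mkq S (a *: u + v) = qD (qZ a (mkq S u)) (mkq S v)).
by rewrite qZ_mkq qD_mkq.
Qed.

HB.instance Definition _ := GRing.isLinear.Build R V (quotm S) *:%R (mkq S) mkq_is_linear.

Lemma mkq_eq0 x : mkq S x = 0 -> S x.
Proof. by move=> x0; have := mkq_eqP (x0 : mkq S x = mkq S 0); rewrite subr0. Qed.

Lemma fg_quotm : fg V -> fg (quotm S).
Proof.
by move=> fgV; apply: (@fg_surj _ _ _ (mkq S) fgV) => q; have [x ->] := quotmP q; exists x.
Qed.

End Projection.

(* [S12] is irrelevant for computing the map, but the map is linear only under it. *)
Definition quotm_map (S1 S2 : submodule V) (S12 : S1 `<=` S2) (q : quotm S1) : quotm S2 :=
  mkq S2 (repq q).

Section QuotientMap.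
Variables (S1 S2 : submodule V) (S12 : S1 `<=` S2).

Lemma quotm_map_mkq x : quotm_map S12 (mkq S1 x) = mkq S2 x.
Proof. by apply: mkq_eq; apply: S12; apply: repq_mkq. Qed.

Lemma quotm_map_is_linear : linear (quotm_map S12).
Proof.
move=> a u v; have [x ->] := quotmP u; have [y ->] := quotmP v.
by rewrite -linearP !quotm_map_mkq linearP.
Qed.

HB.instance Definition _ := GRing.isLinear.Build R (quotm S1) (quotm S2) *:%R
  (quotm_map S12) quotm_map_is_linear.

End QuotientMap.

Lemma top_neq0_maximal (t : top V) : t <> 0 ->
  exists2 S : submodule V, maximal_sub S & ~ S (repq t).
Proof.
move=> t_neq0; apply: contrapT => noS; apply: t_neq0.
rewrite -(mkq_rep t); apply: mkq_eq; rewrite subr0 => S mS.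
by apply: contrapT => nSt; apply: noS; exists S.
Qed.

Lemma maximal_sub_cyclic (S : submodule V) x : maximal_sub S -> ~ S x ->
  forall v, exists2 s, S s & exists r, v = s + r *: x.
Proof.
move=> [_ Smax] nSx v; pose T := [set s + r *: x | s in S & r in [set: R]].
have hT : submod T.
  split; first by exists 0; [exact: (sub0 (sm_ok S)) | exists 0; rewrite // scale0r addr0].
  - move=> _ _ [s Ss [r _ <-]] [s' Ss' [r' _ <-]].
    exists (s + s'); first exact: (subD (sm_ok S) Ss Ss').
    by exists (r + r'); rewrite // scalerDl addrACA.
  - move=> a _ [s Ss [r _ <-]]; exists (a *: s); first exact: (subZ (sm_ok S) a Ss).
    by exists (a * r); rewrite // scalerDr scalerA.
have ST y : S y -> Submodule hT y by move=> Sy; exists y => //; exists 0; rewrite // scale0r addr0.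
have [Tall|TS] := Smax (Submodule hT) ST.
  by have [s Ss [r _ <-]] := Tall v; exists s => //; exists r.
exfalso; apply/nSx/TS; exists 0; first exact: (sub0 (sm_ok S)).
by exists 1; rewrite // scale1r add0r.
Qed.

End Quotients.

Unset Implicit Arguments.
Set Strict Implicit.

Theorem lemma2p5 (R : pzRingType) (hR : left_artinian R)
  (alpha beta : forall V : lmodType R, submodule V)
  (halpha : preradical alpha) (hbeta : preradical beta)
  (hidem : forall M : lmodType R, fg M ->
     forall x : subm (alpha M), alpha (subm (alpha M)) x)
  (hTF : forall M : lmodType R, fg M ->
     (forall x : M, beta M x) -> forall x : M, alpha M x -> x = 0)
  (M : lmodType R) (hM : fg M) :
  (forall t : top (subm (alpha M)), beta (top (subm (alpha M))) t -> t = 0) /\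
  (forall t : top (subm (alpha M)), alpha (top (subm (alpha M))) t).
Proof.
set N := subm (alpha M).
have fgN : fg N := fg_subm (artinian_noetherian hR) _ hM.
have fgT : fg (top N) := fg_quotm _ fgN.
have alphaT (t : top N) : alpha (top N) t.
  by rewrite -(mkq_rep t); exact: (halpha _ _ (mkq (Defs.rad N)) fgN fgT _ (hidem M hM _)).
split=> // t beta_t; apply: contrapT => /top_neq0_maximal [S maxS nSt].
pose g : {linear top N -> quotm S} := quotm_map (fun x (radx : Defs.rad N x) => radx S maxS).
have fgQ : fg (quotm S) := fg_quotm _ fgN.
have gt : g t = mkq S (repq t) by rewrite -{1}(mkq_rep t); exact: quotm_map_mkq.
have betaQ (q : quotm S) : beta (quotm S) q.
  have [v ->] := quotmP q; have [s Ss [r ->]] := maximal_sub_cyclic maxS nSt v.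
  have -> : mkq S (s + r *: repq t) = g (r *: t).
    by rewrite linearZ gt -linearZ; apply: mkq_eq; rewrite addrK.
  exact: hbeta _ _ g fgT fgQ _ (subZ (sm_ok _) r beta_t).
apply/nSt/mkq_eq0; rewrite -gt.
exact: hTF _ fgQ betaQ _ (halpha _ _ g fgT fgQ _ (alphaT t)).
Qed.
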